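(* Let $q$ be an odd prime power and $m\geq 2$. For each $1\leq i\leq m$ there exists a coset leader $S_i$ modulo $q^m-1$ with $w_q(S_i)=(q-1)m-i$. Moreover, for $1\leq i\leq m-1$, if $M_i$ and $M_{i+1}$ denote the largest coset leaders modulo $q^m-1$ with $w_q(M_i)=(q-1)m-i$ and $w_q(M_{i+1})=(q-1)m-(i+1)$ respectively, then $M_i>M_{i+1}$.
   Context: For $0\leq s\leq q^m-2$ with $q$-adic expansion $s=\sum_{j=0}^{m-1}s_jq^j$ ($0\leq s_j\leq q-1$), the $q$-weight is $w_q(s)=\sum_{j=0}^{m-1}s_j$. The $q$-cyclotomic coset of $s$ modulo $q^m-1$ is $\{s,sq,sq^2,\ldots\}\bmod(q^m-1)$; its smallest element is its coset leader, and ''coset leader modulo $q^m-1$'' means an integer equal to the coset leader of its own coset. *)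

From mathcomp Require Import all_boot.
Set Implicit Arguments. Unset Strict Implicit. Unset Printing Implicit Defensive.

Definition wq (q m s : nat) : nat := \sum_(j < m) ((s %/ q ^ j) %% q).

Definition is_coset_leader (q m s : nat) : Prop :=
  s < q ^ m - 1 /\ forall j : nat, s <= (s * q ^ j) %% (q ^ m - 1).

Definition is_largest_leader_of_weight (q m w M : nat) : Prop :=
  [/\ is_coset_leader q m M, wq q m M = w &
      forall s, is_coset_leader q m s -> wq q m s = w -> s <= M].

Definition odd_prime_power (q : nat) : Prop :=
  exists p k : nat, [/\ prime p, odd p, 0 < k & q = p ^ k].

From mathcomp Require Import all_boot zify.

Set Implicit Arguments.
Unset Strict Implicit.
Unset Printing Implicit Defensive.

(* Let k be the lowest position at which the base-q digit of a coset leader s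
   is not q-1.  Then s + q^k is again a coset leader, of weight one more, as
   long as its top digit stays below q-1: a cyclic rotation either keeps the
   new unit inside its low block, where it only adds to a rotation of s, or
   moves a block of maximal digits to the top, producing a number of top
   digit q-1.  If the weight of s is at most (q-1)m-2 the top digit does stay
   below q-1.  Starting from 0 this gives leaders of every weight below
   (q-1)m, and starting from M_(i+1) a leader of weight (q-1)m-i larger than
   M_(i+1). *)

Definition digit (q p x : nat) : nat := (x %/ q ^ p) %% q.

(* For x < q^m - 1 and j < m, the residue of x * q^j modulo q^m - 1: the m
   base-q digits of x shifted cyclically by j places. *)
Definition rot_digits (q m j x : nat) : nat :=
  (x %% q ^ (m - j)) * q ^ j + x %/ q ^ (m - j).

Lemma modnD_small x c d : x %% d + c < d -> (x + c) %% d = x %% d + c.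
Proof.
move=> lt_d; rewrite {1}(divn_eq x d) -addnA modnMDl modn_small //.
Qed.

Lemma divnD_small x c d : x %% d + c < d -> (x + c) %/ d = x %/ d.
Proof.
move=> lt_d; rewrite {1}(divn_eq x d) -addnA divnMDl ?(divn_small lt_d) ?addn0 //; lia.
Qed.

Section Digits.

Variable q : nat.
Hypothesis q_gt0 : 0 < q.

Lemma expq_gt0 k : 0 < q ^ k.
Proof. by rewrite expn_gt0 q_gt0. Qed.

Lemma digit_lt p x : digit q p x < q.
Proof. exact: ltn_pmod. Qed.

Lemma modn_expS k x : x %% q ^ k.+1 = x %% q ^ k + digit q k x * q ^ k.
Proof.
have r_lt := ltn_pmod x (expq_gt0 k); have d_lt := digit_lt k x.
rewrite {1}(divn_eq x (q ^ k)) {1}(divn_eq (x %/ q ^ k) q) -/(digit q k x).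
rewrite expnS mulnDl -mulnA -addnA modnMDl modn_small; nia.
Qed.

Lemma modn_expD_lt k K x :
  digit q k x < q.-1 -> k < K -> x %% q ^ K + q ^ k < q ^ K.
Proof.
move=> d_lt /subnKC <-; elim: (K - k.+1) => [|t IH].
  rewrite addn0 modn_expS expnS; have := ltn_pmod x (expq_gt0 k); nia.
rewrite addnS modn_expS expnS; have := digit_lt (k.+1 + t) x; nia.
Qed.

Lemma modn_exp_max_digits b x :
  (forall p, p < b -> digit q p x = q.-1) -> x %% q ^ b = (q ^ b).-1.
Proof.
elim: b => [|b IH] max_x; first by rewrite expn0 modn1.
rewrite modn_expS IH => [|p p_lt]; last by apply: max_x; apply: ltnW.
rewrite max_x // expnS; have := expq_gt0 b; nia.
Qed.

Lemma digitD_exp k p x :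
  digit q k x < q.-1 -> digit q p (x + q ^ k) = digit q p x + (p == k).
Proof.
move=> d_lt; rewrite /digit.
case: (ltngtP p k) => [lt_pk | lt_kp | ->].
- rewrite -(subnK (ltnW lt_pk)) expnD divnDMl ?expq_gt0 // addn0.
  have /dvdnP[c ->] : q %| q ^ (k - p) by rewrite -(subnSK lt_pk) expnS dvdn_mulr.
  by rewrite addnC modnMDl.
- by rewrite divnD_small ?addn0 // modn_expD_lt.
- rewrite -{1}(mul1n (q ^ k)) divnDMl ?expq_gt0 // -modnDml modn_small //.
  by move: d_lt; rewrite /digit; lia.
Qed.

Lemma wqS n s : wq q n.+1 s = wq q n s + digit q n s.
Proof. by rewrite /wq big_ord_recr. Qed.

Lemma wq_max_digits n s :
  (forall p, p < n -> digit q p s = q.-1) -> wq q n s = q.-1 * n.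
Proof.
move=> max_s; rewrite /wq (eq_bigr (fun=> q.-1)) => [|p _]; last exact: max_s.
by rewrite sum_nat_const card_ord mulnC.
Qed.

Lemma wq_add_exp n k s :
  digit q k s < q.-1 -> wq q n (s + q ^ k) = wq q n s + (k < n).
Proof.
move=> d_lt; elim: n => [|n IH]; first by rewrite /wq !big_ord0.
rewrite !wqS IH digitD_exp // ltnS.
by case: ltngtP => _; rewrite ?addn0 ?addn1 ?addnS.
Qed.

Lemma lowest_nonmax_digit n s : wq q n s < q.-1 * n ->
  exists k, [/\ k < n, digit q k s < q.-1 & forall p, p < k -> digit q p s = q.-1].
Proof.
move=> w_lt.
have : ~~ [forall p : 'I_n, digit q p s == q.-1].
  apply: contraTN w_lt => /forallP max_s; rewrite -leqNgt wq_max_digits //.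
  by move=> p p_lt; apply/eqP/(max_s (Ordinal p_lt)).
rewrite negb_forall => /existsP[p0 p0_ne].
have ex_k : exists k, (k < n) && (digit q k s < q.-1).
  by exists p0; rewrite ltn_ord /=; have := digit_lt p0 s; lia.
have [k /andP[k_lt d_lt] k_min] := ex_minnP ex_k.
exists k; split=> // p p_lt.
have [d_p_lt | ] := ltnP (digit q p s) q.-1; last by have := digit_lt p s; lia.
by have := k_min p; rewrite (ltn_trans p_lt k_lt) d_p_lt => /(_ isT); lia.
Qed.

End Digits.

Lemma modn_mul_exp_periodic q m j x : 0 < q ->
  (x * q ^ j) %% (q ^ m - 1) = (x * q ^ (j %% m)) %% (q ^ m - 1).
Proof.
move=> q_gt0; have qm_1 : q ^ m = 1 %[mod q ^ m - 1].
  by rewrite -{1}(subnK (expq_gt0 q_gt0 m)) modnDl.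
rewrite {1}(divn_eq j m) (mulnC (j %/ m)) expnD expnM mulnCA -modnMml.
by rewrite -modnXm qm_1 modnXm exp1n modnMml mul1n.
Qed.

Lemma modn_swap_blocks a b P Q : a < P -> b < Q -> a * Q + b < P * Q - 1 ->
  ((a * Q + b) * P) %% (P * Q - 1) = b * P + a.
Proof.
move=> a_lt b_lt ab_lt.
have -> : (a * Q + b) * P = a * (P * Q - 1) + (b * P + a) by nia.
by rewrite modnMDl modn_small //; nia.
Qed.

Section CosetLeaders.

Variables q m : nat.
Hypotheses (q_gt1 : 1 < q) (m_gt0 : 0 < m).

Let q_gt0 : 0 < q. Proof. exact: ltnW. Qed.

Lemma modn_mul_exp_rot j x : x < q ^ m - 1 -> j < m ->
  (x * q ^ j) %% (q ^ m - 1) = rot_digits q m j x.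
Proof.
move=> x_lt j_lt; have qm : q ^ m = q ^ j * q ^ (m - j).
  by rewrite -expnD subnKC // ltnW.
rewrite {1}(divn_eq x (q ^ (m - j))) qm modn_swap_blocks ?ltn_pmod ?expq_gt0 //.
  by rewrite ltn_divLR ?expq_gt0 // -qm; lia.
by rewrite -qm -divn_eq.
Qed.

Lemma coset_leaderP x : is_coset_leader q m x <->
  x < q ^ m - 1 /\ (forall j, j < m -> x <= rot_digits q m j x).
Proof.
split=> [[x_lt leader_x] | [x_lt rot_ge]]; split=> // j.
  by move=> j_lt; rewrite -modn_mul_exp_rot // leader_x.
by rewrite modn_mul_exp_periodic // modn_mul_exp_rot ?rot_ge ?ltn_pmod.
Qed.

Lemma top_digit_lt x : x < q ^ m ->
  (digit q m.-1 x < q.-1) = (x < q.-1 * q ^ m.-1).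
Proof.
move=> x_lt; rewrite -ltn_divLR ?expq_gt0 // /digit modn_small //.
by rewrite ltn_divLR ?expq_gt0 // -expnS prednK.
Qed.

Lemma leader_top_digit_lt s k : is_coset_leader q m s -> k < m ->
  digit q k s < q.-1 -> digit q m.-1 s < q.-1.
Proof.
move=> /coset_leaderP[s_lt rot_ge] k_lt d_lt.
(* Rotate the non-maximal digit k to the top position. *)
have := rot_ge (m.-1 - k) ltac:(lia).
rewrite /rot_digits (_ : m - (m.-1 - k) = k.+1); last by lia.
have qm1 : q ^ m.-1 = q ^ k * q ^ (m.-1 - k) by rewrite -expnD subnKC // -ltnS prednK.
have qm : q ^ m = q ^ k.+1 * q ^ (m.-1 - k) by rewrite expnS -mulnA -qm1 -expnS prednK.
have hi_lt : s %/ q ^ k.+1 < q ^ (m.-1 - k).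
  by rewrite ltn_divLR ?expq_gt0 // mulnC -qm; lia.
have lo_lt := ltn_pmod s (expq_gt0 q_gt0 k).
rewrite modn_expS // top_digit_lt ?qm1; last by lia.
move: hi_lt lo_lt d_lt; set hi := s %/ _; set lo := s %% _; set d := digit q k s.
set P := q ^ k; set J := q ^ (m.-1 - k) => hi_lt lo_lt d_lt s_le.
have P_gt0 : 0 < P by apply: expq_gt0.
have top_le : lo + d * P <= q.-1 * P - 1.
  have : d * P <= q.-2 * P by rewrite leq_mul2r -ltnS prednK ?d_lt ?orbT //; lia.
  have : q.-1 * P = q.-2 * P + P by rewrite -mulSnr prednK //; lia.
  lia.
have : (lo + d * P) * J <= (q.-1 * P - 1) * J by rewrite leq_mul2r top_le orbT.
have : J <= q.-1 * P * J by rewrite leq_pmull // muln_gt0 P_gt0; lia.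
rewrite mulnBl mul1n -mulnA; lia.
Qed.

Lemma leader_add_exp s k : is_coset_leader q m s -> k < m ->
  digit q k s < q.-1 -> (forall p, p < k -> digit q p s = q.-1) ->
  digit q m.-1 (s + q ^ k) < q.-1 -> is_coset_leader q m (s + q ^ k).
Proof.
move=> /coset_leaderP[s_lt rot_ge] k_lt d_lt low_max.
have s'_lt : s + q ^ k < q ^ m.
  by have := modn_expD_lt q_gt0 d_lt k_lt; rewrite modn_small //; lia.
have qm : q.-1 * q ^ m.-1 = q ^ m - q ^ m.-1.
  by rewrite -subn1 mulnBl mul1n -expnS prednK.
have qm_gt0 := expq_gt0 q_gt0 m.-1.
rewrite top_digit_lt // => top_lt.
apply/coset_leaderP; split=> [|j j_lt]; first by lia.
have [kj_lt | kj_ge] := ltnP (k + j) m.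
- have lo_lt : s %% q ^ (m - j) + q ^ k < q ^ (m - j).
    by apply: modn_expD_lt => //; lia.
  rewrite /rot_digits modnD_small // divnD_small // mulnDl -expnD.
  have := rot_ge j j_lt; rewrite /rot_digits.
  have : q ^ k <= q ^ (k + j) by rewrite leq_pexp2l // leq_addr.
  lia.
- have lo_max : (s + q ^ k) %% q ^ (m - j) = (q ^ (m - j)).-1.
    apply: modn_exp_max_digits => // p p_lt.
    have p_ne : (p == k) = false by apply/eqP; lia.
    by rewrite digitD_exp // low_max ?p_ne ?addn0 //; lia.
  have rot_ge_top : q ^ m - q ^ j <= rot_digits q m j (s + q ^ k).
    by rewrite /rot_digits lo_max -subn1 mulnBl mul1n -expnD subnK ?leq_addr // ltnW.
  have : q ^ j <= q ^ m.-1 by rewrite leq_pexp2l // -ltnS prednK.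
  lia.
Qed.

Lemma leader_succ_weight s : is_coset_leader q m s -> wq q m s + 2 <= q.-1 * m ->
  exists s', [/\ is_coset_leader q m s', wq q m s' = wq q m s + 1 & s < s'].
Proof.
move=> leader_s w_le.
have w_lt : wq q m s < q.-1 * m by lia.
have [k [k_lt d_lt low_max]] := lowest_nonmax_digit q_gt0 w_lt.
exists (s + q ^ k); split; last 2 first.
- by rewrite wq_add_exp // k_lt.
- by rewrite -{1}(addn0 s) ltn_add2l expq_gt0.
apply: leader_add_exp => //; rewrite digitD_exp //.
have [top_k | _] := eqVneq k m.-1; last first.
  by rewrite addn0 (leader_top_digit_lt leader_s k_lt).
have qm : q.-1 * m = q.-1 * m.-1 + q.-1 by rewrite -mulnSr prednK.
move: w_le; rewrite -{1}(prednK m_gt0) wqS wq_max_digits -?top_k //; lia.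
Qed.

Lemma leader_of_weight w : w < q.-1 * m ->
  exists S, is_coset_leader q m S /\ wq q m S = w.
Proof.
elim: w => [_ | w IH w_lt].
  exists 0; split; last by rewrite /wq big1 // => p _; rewrite div0n mod0n.
  apply/coset_leaderP; split=> [|j _ //].
  by rewrite subn_gt0 -{1}(expn0 q) ltn_exp2l.
have [S [leader_S wS]] := IH (ltnW w_lt).
have [|S' [leader_S' wS' _]] := leader_succ_weight leader_S; first by lia.
by exists S'; rewrite wS' wS addn1.
Qed.

End CosetLeaders.

Lemma odd_prime_power_gt1 q : odd_prime_power q -> 1 < q.
Proof.
by move=> [p [k [p_prime _ k_gt0 ->]]]; rewrite -(expn0 p) ltn_exp2l ?prime_gt1.
Qed.

Theorem lemma17 (q m : nat) :
  odd_prime_power q -> 2 <= m ->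
  (forall i, 1 <= i <= m ->
     exists S, is_coset_leader q m S /\ wq q m S = (q - 1) * m - i) /\
  (forall i M1 M2, 1 <= i <= m - 1 ->
     is_largest_leader_of_weight q m ((q - 1) * m - i) M1 ->
     is_largest_leader_of_weight q m ((q - 1) * m - i.+1) M2 ->
     M1 > M2).
Proof.
move=> /odd_prime_power_gt1 q_gt1 m_ge2; have m_gt0 : 0 < m by apply: ltnW.
have m_le : m <= q.-1 * m by rewrite leq_pmull // -subn1 subn_gt0.
rewrite (subn1 q); split=> [i /andP[i_ge1 i_le] | i M1 M2 /andP[i_ge1 i_le]].
  by apply: leader_of_weight => //; lia.
move=> [_ _ M1_max] [M2_leader M2_w _].
have [|s [s_leader s_w M2_lt]] := leader_succ_weight q_gt1 m_gt0 M2_leader.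
  by lia.
by apply: leq_trans M2_lt (M1_max _ s_leader _); lia.
Qed.
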